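(* Let $n\ge4$ and $1\le d\le\lfloor n/2\rfloor$, and let $\mathcal{M}_{2,d}$ be the maximum size of a $d$-intersecting family in $\mathbb{G}_2(n,2d)$. Then $\mathcal{M}_{2,d}<2^n-1$.
   Context: $\mathbb{G}_2(n,k)$ denotes the set of all $k$-dimensional subspaces of $\mathbb{F}_2^n$. A family $\mathcal{F}$ of subspaces is $\lambda$-intersecting if $\dim(X\cap Y)=\lambda$ for all distinct $X,Y\in\mathcal{F}$. *)

From HB Require Import structures.
From mathcomp Require Import all_boot all_algebra.
Set Implicit Arguments. Unset Strict Implicit. Unset Printing Implicit Defensive.
Import GRing.Theory.
Local Open Scope ring_scope.

Notation F2n n := 'rV['F_2]_n.

Definition in_Grass (n k : nat) (X : {vspace F2n n}) : bool := (\dim X == k)%N.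

Definition lam_intersecting (n lam : nat) (F : seq {vspace F2n n}) : Prop :=
  forall X Y, X \in F -> Y \in F -> X != Y -> \dim (X :&: Y)%VS = lam.
Arguments in_Grass n k X : clear implicits.
Arguments lam_intersecting n lam F : clear implicits.

(* Send each member of the family to the set of its 4^d - 1 nonzero vectors.
   These are subsets of the N = 2^n - 1 nonzero vectors of F_2^n, of size
   k = 4^d - 1, meeting pairwise in l = 2^d - 1 points.  For such sets
   A_1, ..., A_m the quadratic form sum_p (sum_i u_i [p in A_i] + x)^2 equals
   (k - l)|u|^2 + l (sum u)^2 + 2 k x (sum u) + N x^2.  If k^2 <= l N it is
   positive definite, so the indicator vectors of the A_i and the all-ones
   vector are linearly independent and m + 1 <= N.  Otherwise its value at
   u = (N, ..., N), x = -k m is m N ((k - l) N - m (k^2 - l N)) >= 0, and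
   m >= N would force l N < k^2 <= l N + k - l.  With b = 2^d - 1 this puts
   2^n between b (b + 2)^2 - b and b (b + 2)^2, hence between 2^(3d) and
   2^(3d+1), which only happens for d = 1 and n = 3. *)

From mathcomp Require Import all_boot all_order all_algebra all_field.
From mathcomp Require Import zify ring lra.
Set Implicit Arguments. Unset Strict Implicit. Unset Printing Implicit Defensive.
Import GRing.Theory Num.Theory Order.TTheory.

Section NonzeroVectors.
Variables (K : finFieldType) (n : nat).
Local Open Scope ring_scope.

Definition nzvecs (X : {vspace 'rV[K]_n}) : {set 'rV[K]_n} := [set v in X] :\ 0.

Lemma card_nzvecs X : #|nzvecs X| = (#|K| ^ \dim X - 1)%N.
Proof.
have := cardsD1 0 [set v in X].
by rewrite !inE mem0v cardsE card_vspace add1n => ->; rewrite subn1.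
Qed.

Lemma nzvecsI X Y : nzvecs X :&: nzvecs Y = nzvecs (X :&: Y)%VS.
Proof. by apply/setP => v; rewrite !inE memv_cap andbACA andbb. Qed.

Lemma nzvecs_sub X : nzvecs X \subset nzvecs fullv.
Proof. by apply/subsetP => v; rewrite !inE memvf andbT => /andP[]. Qed.

Lemma card_nzvecsf : #|nzvecs fullv| = (#|K| ^ n - 1)%N.
Proof. by rewrite card_nzvecs dimvf /dim /= mul1n. Qed.
End NonzeroVectors.

Section ConstantIntersections.
Local Open Scope ring_scope.

Lemma sumr_mem_card (R : pzSemiRingType) (T : finType) (P B : {set T}) : B \subset P ->
  \sum_(p in P) ((p \in B)%:R : R) = #|B|%:R.
Proof.
move=> sBP; rewrite (big_setID B) /= (setIidPr sBP) addrC big1 => [|p]; last first.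
  by rewrite inE => /andP[/negbTE ->].
by rewrite add0r (eq_bigr (fun=> 1)) ?sumr_const // => p ->.
Qed.

Variables (T : finType) (P : {set T}) (m k l : nat) (A : 'I_m -> {set T}).
Hypothesis subAP : forall i, A i \subset P.
Hypothesis cardA : forall i, #|A i| = k.
Hypothesis cardAI : forall i j, i != j -> #|A i :&: A j| = l.

Lemma sum_sqr_incidence (u : 'I_m -> rat) (x : rat) :
  \sum_(p in P) (\sum_i u i * (p \in A i)%:R + x) ^+ 2 =
  (k%:R - l%:R) * \sum_i u i ^+ 2 + l%:R * (\sum_i u i) ^+ 2
  + 2 * k%:R * x * \sum_i u i + #|P|%:R * x ^+ 2.
Proof.
have sqr_expand p : (\sum_i u i * (p \in A i)%:R + x) ^+ 2 =
    \sum_i \sum_j u i * u j * (p \in A i :&: A j)%:R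
    + 2 * x * \sum_i u i * (p \in A i)%:R + x ^+ 2.
  rewrite sqrrD expr2 big_distrl /=; congr (_ + _ + _); last by rewrite -mulr_natl; ring.
  apply: eq_bigr => i _; rewrite big_distrr /=; apply: eq_bigr => j _; rewrite inE.
  by case: (p \in A i); case: (p \in A j); rewrite /= ?mulr0 ?mul0r ?mulr1.
have inner i : \sum_(p in P) \sum_j u i * u j * (p \in A i :&: A j)%:R
    = \sum_j u i * u j * (l%:R + (k%:R - l%:R) * (i == j)%:R).
  rewrite exchange_big /=; apply: eq_bigr => j _.
  rewrite -big_distrr /= sumr_mem_card ?(subset_trans (subsetIl _ _)) //.
  have [<-|ij] := eqVneq i j; first by rewrite setIid cardA mulr1 addrC subrK.
  by rewrite cardAI // mulr0 addr0.
have linear_term : \sum_(p in P) 2 * x * \sum_i u i * (p \in A i)%:R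
    = 2 * k%:R * x * \sum_i u i.
  rewrite -big_distrr /= exchange_big /= (eq_bigr (fun i => k%:R * u i)) => [|i _].
    by rewrite -big_distrr /=; ring.
  by rewrite -big_distrr /= sumr_mem_card // cardA mulrC.
have diag i :
    (k%:R - l%:R) * u i * \sum_j u j * (i == j)%:R = (k%:R - l%:R) * u i ^+ 2.
  rewrite (bigD1 i) //= eqxx mulr1 big1 ?addr0 => [|j /negbTE]; first by rewrite expr2 mulrA.
  by rewrite eq_sym => ->; rewrite mulr0.
rewrite (eq_bigr _ (fun p _ => sqr_expand p)) !big_split /= sumr_const.
rewrite exchange_big /= (eq_bigr _ (fun i _ => inner i)) linear_term -[_ *+ #|P|]mulr_natr.
have -> : \sum_i \sum_j u i * u j * (l%:R + (k%:R - l%:R) * (i == j)%:R)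
    = \sum_i (l%:R * (u i * \sum_j u j) + (k%:R - l%:R) * u i * \sum_j u j * (i == j)%:R).
  apply: eq_bigr => i _; rewrite !big_distrr -big_split /=.
  by apply: eq_bigr => j _; ring.
rewrite big_split /= (eq_bigr _ (fun i _ => diag i)).
by rewrite -!big_distrr -big_distrl /=; ring.
Qed.

Lemma sum_sqr_incidence_eq0 (u : 'I_m -> rat) (x : rat) :
  (0 < l < k)%N -> (k * k <= #|P| * l)%N ->
  \sum_(p in P) (\sum_i u i * (p \in A i)%:R + x) ^+ 2 = 0 ->
  (forall i, u i = 0) /\ x = 0.
Proof.
move=> /andP[l_gt0 lk] kkN; rewrite sum_sqr_incidence.
set S2 := \sum_i u i ^+ 2; set S := \sum_i u i => Q0.
have lR_gt0 : (0 : rat) < l%:R by rewrite ltr0n.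
have klR_gt0 : (0 : rat) < k%:R - l%:R by rewrite subr_gt0 ltr_nat.
have kkNR : k%:R * k%:R <= #|P|%:R * l%:R :> rat by rewrite -!natrM ler_nat.
have S2_ge0 : 0 <= S2 by apply: sumr_ge0 => i _; apply: sqr_ge0.
(* multiplied by l, the form is a sum of three nonnegative terms *)
have decomp : l%:R * (k%:R - l%:R) * S2 + (l%:R * S + k%:R * x) ^+ 2
    + (#|P|%:R * l%:R - k%:R * k%:R) * x ^+ 2 = 0.
  by rewrite -[RHS](mulr0 l%:R) -Q0; ring.
have t0 : 0 <= l%:R * (k%:R - l%:R) * S2 by rewrite !mulr_ge0 // ltW.
have t1 : 0 <= (l%:R * S + k%:R * x) ^+ 2 by apply: sqr_ge0.
have t2 : 0 <= (#|P|%:R * l%:R - k%:R * k%:R) * x ^+ 2.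
  by rewrite mulr_ge0 ?sqr_ge0 // subr_ge0.
have S2_eq0 : S2 = 0.
  have /eqP : l%:R * (k%:R - l%:R) * S2 = 0 by lra.
  by rewrite !mulf_eq0 (gt_eqF lR_gt0) (gt_eqF klR_gt0) => /eqP.
have u_eq0 i : u i = 0.
  by apply/eqP; rewrite -sqrf_eq0; move/psumr_eq0P: S2_eq0 => -> // j _; apply: sqr_ge0.
split=> //; have /eqP : (l%:R * S + k%:R * x) ^+ 2 = 0 by lra.
rewrite /S big1 // mulr0 add0r sqrf_eq0 mulf_eq0 pnatr_eq0 => /orP[k0|/eqP //].
by move: lk; rewrite (eqP k0) ltn0.
Qed.

Lemma card_lt_of_sqr_le : (0 < l < k)%N -> (k * k <= #|P| * l)%N -> (m < #|P|)%N.
Proof.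
move=> lk kkN.
pose M : 'M[rat]_(m + 1, #|P|) :=
  col_mx (\matrix_(i, c) (enum_val c \in A i)%:R) (const_mx 1).
suff /eqP rkM : row_free M by rewrite -addn1 -rkM rank_leq_col.
apply: inj_row_free => w wM0.
have [v_eq0 x_eq0] : (forall i, w 0 (lshift 1 i) = 0) /\ w 0 (rshift m ord0) = 0.
  apply: (@sum_sqr_incidence_eq0 (fun i => w 0 (lshift 1 i)) (w 0 (rshift m ord0))) => //.
  rewrite big_enum_val /=; apply: big1 => c _.
  have := congr1 (fun z : 'rV[rat]_#|P| => z 0 c) wM0.
  rewrite -{1}[w]hsubmxK mul_row_col !mxE big_ord1 !mxE mulr1.
  move=> wc; apply/eqP; rewrite sqrf_eq0; apply/eqP; rewrite -[RHS]wc; congr (_ + _).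
  by apply: eq_bigr => j _; rewrite !mxE.
apply/rowP => j; rewrite mxE -[j]splitK.
by case: (split j) => j'; rewrite /= ?v_eq0 // ord1.
Qed.

Lemma card_sqr_bound : (0 < #|P|)%N -> (0 < m)%N ->
  (m * (k * k) + l * #|P| <= m * (l * #|P|) + k * #|P|)%N.
Proof.
move=> P_gt0 m_gt0; rewrite -(ler_nat rat) !natrD !natrM.
have : 0 <= \sum_(p in P) (\sum_i #|P|%:R * (p \in A i)%:R - (k * m)%:R) ^+ 2 :> rat.
  by apply: sumr_ge0 => p _; apply: sqr_ge0.
rewrite (sum_sqr_incidence (fun=> #|P|%:R)) !sumr_const card_ord.
rewrite -[#|P|%:R ^+ 2 *+ m]mulr_natr -[#|P|%:R *+ m]mulr_natr natrM.
set N : rat := #|P|%:R; set M : rat := m%:R; set K : rat := k%:R; set L : rat := l%:R.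
have NM_gt0 : 0 < N * M by rewrite mulr_gt0 ?ltr0n.
have -> : (K - L) * (N ^+ 2 * M) + L * (N * M) ^+ 2 + 2 * K * - (K * M) * (N * M)
    + N * (- (K * M)) ^+ 2 = (N * M) * ((K - L) * N - M * (K * K - L * N)) by ring.
rewrite pmulr_rge0 // subr_ge0; lra.
Qed.

Lemma card_lt_of_intersections : (0 < l < k)%N -> (0 < #|P|)%N ->
  ~~ (#|P| * l < k * k <= #|P| * l + (k - l))%N -> (m < #|P|)%N.
Proof.
move=> lk P_gt0 window; have [kk|kk] := leqP (k * k) (#|P| * l).
  exact: card_lt_of_sqr_le.
rewrite ltnNge; apply/negP => Pm.
have card_le := card_sqr_bound P_gt0 (leq_trans P_gt0 Pm).
have mul_le : (#|P| * (k * k - #|P| * l) <= m * (k * k - #|P| * l))%N.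
  by rewrite leq_mul2r Pm orbT.
have : (#|P| * (k * k - #|P| * l + l) <= #|P| * k)%N by nia.
by move: window; rewrite kk /= -ltnNge leq_pmul2l //; lia.
Qed.

End ConstantIntersections.

Lemma exp2_window (b c d n : nat) : 2 ^ d = b.+1 -> 2 ^ n = c.+1 ->
  (c * b < b * (b + 2) * (b * (b + 2)) <= c * b + (b * (b + 2) - b))%N -> n = 3.
Proof.
move=> ed en /andP[lo hi].
have b_gt0 : (0 < b)%N by rewrite lt0n; apply: contraTneq lo => ->; rewrite !muln0.
have {lo} lo : (c < b * (b + 2) * (b + 2))%N by rewrite -(ltn_pmul2l b_gt0); nia.
have {hi} hi : (b * (b + 2) * (b + 2) <= c + b + 1)%N by rewrite -(leq_pmul2l b_gt0); nia.
have e3 : 2 ^ (d * 3) = b.+1 ^ 3 by rewrite expnM ed.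
have : (2 ^ (d * 3) <= 2 ^ n)%N by rewrite e3 en; nia.
have : (2 ^ n < 2 ^ (d * 3).+1)%N by rewrite expnS e3 en; nia.
rewrite ltn_exp2l // leq_exp2l // => n_lt n_ge.
have n3d : n = d * 3 by lia.
have b1 : b = 1 by move: en; rewrite n3d e3; nia.
have : 2 ^ d = 2 ^ 1 by rewrite ed b1.
by move/eqP; rewrite eqn_exp2l // => /eqP d1; rewrite n3d d1.
Qed.

Theorem proposition5 (n d : nat) :
  (4 <= n)%N -> (1 <= d)%N -> (d <= n./2)%N ->
  forall F : seq {vspace F2n n},
    uniq F ->
    (forall X, X \in F -> in_Grass n (2 * d) X) ->
    lam_intersecting n d F ->
    (size F < 2 ^ n - 1)%N.
Proof.
(* d <= n/2 only ensures that G_2(n,2d) is nonempty; the bound does not need it. *)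
move=> n_ge4 d_gt0 _ F uniqF dimF interF.
have exp2S e : 2 ^ e = (2 ^ e - 1).+1 by rewrite subn1 prednK ?expn_gt0.
set b := (2 ^ d - 1)%N; set c := (2 ^ n - 1)%N.
have b_gt0 : (0 < b)%N by rewrite subn_gt0 -{1}(expn0 2) ltn_exp2l.
have c_gt0 : (0 < c)%N by rewrite subn_gt0 -{1}(expn0 2) ltn_exp2l //; lia.
have cardP : #|nzvecs (fullv : {vspace F2n n})| = c by rewrite card_nzvecsf card_Fp.
pose A (i : 'I_(size F)) := nzvecs (nth 0%VS F i).
rewrite -cardP; apply: (@card_lt_of_intersections _ _ _ (b * (b + 2)) b A).
- by move=> i; apply: nzvecs_sub.
- move=> i; rewrite card_nzvecs card_Fp // (eqP (dimF _ (mem_nth 0%VS (ltn_ord i)))).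
  by rewrite mulnC expnM (exp2S d) -/b; nia.
- move=> i j ij; rewrite nzvecsI card_nzvecs card_Fp // interF ?mem_nth //.
  by rewrite nth_uniq.
- by apply/andP; split; nia.
- by rewrite cardP.
- apply/negP; rewrite cardP => /(exp2_window (exp2S d) (exp2S n)) n3.
  by rewrite n3 in n_ge4.
Qed.
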